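(* Let $n\ge2$ and let $r_1,\ldots,r_{n-1}$ be positive reals with $r_i>\sum_{j>i}r_j$ for each $i$. For $\overline\theta=(\theta_1,\ldots,\theta_{n-1})$, $\theta_i\in\mathbb{R}/2\pi$, define $w_n=r_{n-1}$, $w_i=r_{i-1}+w_{i+1}\cos\theta_i$ for $1<i\le n-1$, $x_i=w_i\sin\theta_{i-1}$ for $1<i\le n$, and $x_1=w_2\cos\theta_1$. Then $\overline\theta\mapsto(x_1(\overline\theta),\ldots,x_n(\overline\theta))$ is an embedding of the torus $T^{n-1}$ in $\mathbb{R}^n$ satisfying $x_1(-\overline\theta)=x_1(\overline\theta)$ and $x_i(-\overline\theta)=-x_i(\overline\theta)$ for $2\le i\le n$. *)

From Stdlib Require Import Reals Lra Lia List ZArith.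
Import ListNotations.
Open Scope R_scope.

(* Indices follow the paper: r_1..r_{n-1}, theta_1..theta_{n-1}, x_1..x_n.
   Sequences are functions nat -> R; values at other indices are irrelevant. *)

(* wfrom r th n k = w_{n-k}:  w_n = r_{n-1},
   w_i = r_{i-1} + w_{i+1} cos theta_i. *)
Fixpoint wfrom (r th : nat -> R) (n k : nat) : R :=
  match k with
  | O => r (n - 1)%nat
  | S k' => r (n - k' - 2)%nat + wfrom r th n k' * cos (th (n - k' - 1)%nat)
  end.

Definition w (r th : nat -> R) (n i : nat) : R := wfrom r th n (n - i).

Definition xcoord (r th : nat -> R) (n i : nat) : R :=
  if Nat.eqb i 1 then w r th n 2 * cos (th 1%nat)
  else w r th n i * sin (th (i - 1)%nat).

Definition tail_sum (r : nat -> R) (n i : nat) : R :=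
  fold_right Rplus 0 (map r (seq (S i) (n - 1 - i))).

Definition upd (th : nat -> R) (i : nat) (t : R) : nat -> R :=
  fun j => if Nat.eqb j i then t else th j.

(* Write T_i for tail_sum r n i.  Downward induction on w_{i+1} = r_i + w_{i+2} cos th_{i+1}
   gives |w_{i+1} - r_i| <= T_i, so r_i > T_i makes every radius w_2, ..., w_n positive.
   Now (x_1, x_2) = w_2 (cos th_1, sin th_1) and (w_i - r_{i-1}, x_{i+1}) = w_{i+1} (cos th_i, sin th_i)
   are polar coordinates with positive radii, so x determines w_2, th_1, w_3, th_2, ... in turn,
   up to multiples of 2 pi.  Differentiating the same relations, a vanishing combination
   sum_j c_j d_j x of partial derivatives is rotated by th_k from one level to the next, and
   positivity of w_{k+1} forces c_k = 0: the map is an immersion. *)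

From Coquelicot Require Import Coquelicot.
From Stdlib Require Import Reals Lra Lia List ZArith FunctionalExtensionality.
Open Scope R_scope.

Lemma polar_inj a a' t t' : 0 < a -> 0 < a' ->
  a * cos t = a' * cos t' -> a * sin t = a' * sin t' ->
  a = a' /\ exists k : Z, t' = t + 2 * IZR k * PI.
Proof.
  intros ha ha' hc hs.
  pose proof (sin2_cos2 t) as e. pose proof (sin2_cos2 t') as e'. unfold Rsqr in *.
  assert (hsq : a * a = a' * a').
  { transitivity ((a * sin t) * (a * sin t) + (a * cos t) * (a * cos t)).
    - transitivity (a * a * (sin t * sin t + cos t * cos t)); [rewrite e|]; ring.
    - rewrite hc, hs.
      transitivity (a' * a' * (sin t' * sin t' + cos t' * cos t')); [|rewrite e']; ring. }
  assert (a = a') as <- by nra. split; [reflexivity|].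
  assert (cos t = cos t') as Hc by (apply Rmult_eq_reg_l with a; lra).
  assert (sin t = sin t') as Hs by (apply Rmult_eq_reg_l with a; lra).
  assert (hd : cos (2 * ((t' - t) / 2)) = 1).
  { replace (2 * ((t' - t) / 2)) with (t' - t) by field.
    rewrite cos_minus, <- Hc, <- Hs. lra. }
  rewrite cos_2a_sin in hd.
  destruct (sin_eq_0_0 ((t' - t) / 2)) as [k hk]; [nra|].
  exists k. lra.
Qed.

Lemma rotation_eq0 t a b :
  a * cos t - b * sin t = 0 -> a * sin t + b * cos t = 0 -> a = 0 /\ b = 0.
Proof.
  intros h1 h2. pose proof (sin2_cos2 t) as e. unfold Rsqr in e.
  split.
  - transitivity (cos t * (a * cos t - b * sin t) + sin t * (a * sin t + b * cos t)).
    + transitivity (a * (sin t * sin t + cos t * cos t)); [rewrite e|]; ring.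
    + rewrite h1, h2. ring.
  - transitivity (cos t * (a * sin t + b * cos t) - sin t * (a * cos t - b * sin t)).
    + transitivity (b * (sin t * sin t + cos t * cos t)); [rewrite e|]; ring.
    + rewrite h1, h2. ring.
Qed.

Lemma w_last r th n : w r th n n = r (n - 1)%nat.
Proof. unfold w. now rewrite Nat.sub_diag. Qed.

Lemma w_rec r th n i : (1 <= i < n)%nat ->
  w r th n i = r (i - 1)%nat + w r th n (S i) * cos (th i).
Proof.
  intros Hi. unfold w. replace (n - i)%nat with (S (n - S i)) by lia. simpl.
  now replace (n - (n - S i) - 2)%nat with (i - 1)%nat by lia;
      replace (n - (n - S i) - 1)%nat with i by lia.
Qed.

Lemma tail_sum_last r n : tail_sum r n (n - 1) = 0.
Proof. unfold tail_sum. now rewrite Nat.sub_diag. Qed.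

Lemma tail_sum_S r n i : (S i <= n - 1)%nat ->
  tail_sum r n i = r (S i) + tail_sum r n (S i).
Proof.
  intros Hi. unfold tail_sum. now replace (n - 1 - i)%nat with (S (n - 1 - S i)) by lia.
Qed.

Lemma xcoord_1 r th n : xcoord r th n 1 = w r th n 2 * cos (th 1%nat).
Proof. reflexivity. Qed.

Lemma xcoord_S r th n i : (1 <= i)%nat -> xcoord r th n (S i) = w r th n (S i) * sin (th i).
Proof.
  intros Hi. unfold xcoord. replace (S i - 1)%nat with i by lia.
  now destruct (Nat.eqb_spec (S i) 1); [lia|].
Qed.

Lemma w_opp r th n i : w r (fun j => - th j) n i = w r th n i.
Proof.
  unfold w. induction (n - i)%nat as [|k IH]; simpl; [reflexivity|]. now rewrite IH, cos_neg.
Qed.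

Lemma xcoord_opp_1 r th n : xcoord r (fun j => - th j) n 1 = xcoord r th n 1.
Proof. now rewrite !xcoord_1, w_opp, cos_neg. Qed.

Lemma xcoord_opp r th n i : (2 <= i)%nat ->
  xcoord r (fun j => - th j) n i = - xcoord r th n i.
Proof.
  intros Hi. destruct i as [|i]; [lia|].
  rewrite !xcoord_S by lia. rewrite w_opp, sin_neg. ring.
Qed.

Definition kronecker (m j : nat) : R := if Nat.eqb m j then 1 else 0.

Fixpoint dwfrom (r th : nat -> R) (n j k : nat) : R :=
  match k with
  | O => 0
  | S k' => dwfrom r th n j k' * cos (th (n - k' - 1)%nat)
            + wfrom r th n k' * (- sin (th (n - k' - 1)%nat) * kronecker (n - k' - 1) j)
  end.

Definition dw (r th : nat -> R) (n j i : nat) : R := dwfrom r th n j (n - i).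

Definition dxcoord (r th : nat -> R) (n j i : nat) : R :=
  if Nat.eqb i 1
  then dw r th n j 2 * cos (th 1%nat) + w r th n 2 * (- sin (th 1%nat) * kronecker 1 j)
  else dw r th n j i * sin (th (i - 1)%nat)
       + w r th n i * (cos (th (i - 1)%nat) * kronecker (i - 1) j).

Lemma upd_same th j : upd th j (th j) = th.
Proof.
  apply functional_extensionality. intros m. unfold upd.
  now destruct (Nat.eqb_spec m j) as [->|].
Qed.

Lemma derivable_pt_lim_upd f f' th j m : (forall x, derivable_pt_lim f x (f' x)) ->
  derivable_pt_lim (fun t => f (upd th j t m)) (th j) (f' (th m) * kronecker m j).
Proof.
  intros Hf. unfold upd, kronecker. destruct (Nat.eqb_spec m j) as [->|].
  - rewrite Rmult_1_r. apply Hf.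
  - rewrite Rmult_0_r. apply derivable_pt_lim_const.
Qed.

Lemma derivable_pt_lim_wfrom r th n j k :
  derivable_pt_lim (fun t => wfrom r (upd th j t) n k) (th j) (dwfrom r th n j k).
Proof.
  induction k as [|k IH]; simpl; [apply derivable_pt_lim_const|].
  pose proof (derivable_pt_lim_plus _ _ _ _ _
    (derivable_pt_lim_const (r (n - k - 2)%nat) (th j))
    (derivable_pt_lim_mult _ _ _ _ _ IH
       (derivable_pt_lim_upd cos (fun x => - sin x) th j (n - k - 1) derivable_pt_lim_cos)))
    as H.
  unfold plus_fct, mult_fct, fct_cte in H. now rewrite upd_same, Rplus_0_l in H.
Qed.

Lemma derivable_pt_lim_xcoord r th n j i :
  derivable_pt_lim (fun t => xcoord r (upd th j t) n i) (th j) (dxcoord r th n j i).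
Proof.
  unfold xcoord, dxcoord, w, dw. destruct (Nat.eqb i 1).
  - pose proof (derivable_pt_lim_mult _ _ _ _ _ (derivable_pt_lim_wfrom r th n j (n - 2))
      (derivable_pt_lim_upd cos (fun x => - sin x) th j 1 derivable_pt_lim_cos)) as H.
    unfold mult_fct in H. now rewrite upd_same in H.
  - pose proof (derivable_pt_lim_mult _ _ _ _ _ (derivable_pt_lim_wfrom r th n j (n - i))
      (derivable_pt_lim_upd sin cos th j (i - 1) derivable_pt_lim_sin)) as H.
    unfold mult_fct in H. now rewrite upd_same in H.
Qed.

Lemma dw_rec r th n j i : (1 <= i < n)%nat ->
  dw r th n j i = dw r th n j (S i) * cos (th i) + w r th n (S i) * (- sin (th i) * kronecker i j).
Proof.
  intros Hi. unfold dw, w. replace (n - i)%nat with (S (n - S i)) by lia. simpl.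
  now replace (n - (n - S i) - 1)%nat with i by lia.
Qed.

(* w_1 = r_0 + x_1 with r_0 a constant, so x_1 and w_1 have the same derivatives. *)
Lemma dxcoord_1 r th n j : (1 < n)%nat -> dxcoord r th n j 1 = dw r th n j 1.
Proof. intros Hn. rewrite (dw_rec r th n j 1) by lia. reflexivity. Qed.

Lemma dxcoord_S r th n j i : (1 <= i)%nat ->
  dxcoord r th n j (S i)
  = dw r th n j (S i) * sin (th i) + w r th n (S i) * (cos (th i) * kronecker i j).
Proof.
  intros Hi. unfold dxcoord. replace (S i - 1)%nat with i by lia.
  now destruct (Nat.eqb_spec (S i) 1); [lia|].
Qed.

Definition sum_map (l : list nat) (f : nat -> R) : R := fold_right Rplus 0 (map f l).

Lemma sum_map_ext l f g : (forall j, f j = g j) -> sum_map l f = sum_map l g.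
Proof. intros H. unfold sum_map. now rewrite (map_ext f g H). Qed.

Lemma sum_map_lin l a b f g :
  sum_map l (fun j => a * f j + b * g j) = a * sum_map l f + b * sum_map l g.
Proof. induction l as [|x l IH]; unfold sum_map in *; simpl; [ring|]. rewrite IH. ring. Qed.

Lemma sum_map_kronecker_notin l c k : ~ In k l ->
  sum_map l (fun j => c j * kronecker k j) = 0.
Proof.
  induction l as [|x l IH]; intros Hk; unfold sum_map in *; simpl; [reflexivity|].
  unfold kronecker at 1. destruct (Nat.eqb_spec k x) as [->|_].
  - exfalso. apply Hk. now left.
  - rewrite IH by (intros H; apply Hk; now right). ring.
Qed.

Lemma sum_map_kronecker l c k : NoDup l -> In k l ->
  sum_map l (fun j => c j * kronecker k j) = c k.
Proof.
  induction l as [|x l IH]; intros Hl Hk; [destruct Hk|]. inversion Hl as [|? ? Hx Hl']; subst.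
  unfold sum_map in *; simpl. unfold kronecker at 1.
  destruct (Nat.eqb_spec k x) as [->|Hkx].
  - pose proof (sum_map_kronecker_notin l c x Hx) as H0. unfold sum_map in H0. rewrite H0. ring.
  - destruct Hk as [->|Hk]; [easy|]. rewrite IH by assumption. ring.
Qed.

Section Dominance.

Variables (r : nat -> R) (n : nat).
Hypothesis hdom : forall i, (1 <= i <= n - 1)%nat -> r i > tail_sum r n i.

Lemma w_between th i : (1 <= i <= n - 1)%nat ->
  r i - tail_sum r n i <= w r th n (S i) <= r i + tail_sum r n i.
Proof.
  remember (n - 1 - i)%nat as d eqn:Hd. revert i Hd.
  induction d as [|d IH]; intros i Hd Hi.
  - replace i with (n - 1)%nat by lia. replace (S (n - 1)) with n by lia.
    rewrite w_last, tail_sum_last. lra.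
  - pose proof (IH (S i) ltac:(lia) ltac:(lia)) as Hnext.
    pose proof (hdom (S i) ltac:(lia)).
    pose proof (COS_bound (th (S i))).
    rewrite (w_rec r th n (S i)), (tail_sum_S r n i) by lia.
    replace (S i - 1)%nat with i by lia.
    nra.
Qed.

Lemma w_pos th i : (1 <= i <= n - 1)%nat -> 0 < w r th n (S i).
Proof. intros Hi. pose proof (w_between th i Hi). pose proof (hdom i Hi). lra. Qed.

Lemma xcoord_inj th th' :
  (forall i, (1 <= i <= n)%nat -> xcoord r th n i = xcoord r th' n i) ->
  forall j, (1 <= j <= n - 1)%nat -> exists k : Z, th' j = th j + 2 * IZR k * PI.
Proof.
  intros hx.
  assert (polar_step : forall j, (1 <= j <= n - 1)%nat ->
    w r th n (S j) = w r th' n (S j) /\ exists k : Z, th' j = th j + 2 * IZR k * PI).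
  { induction j as [|j IH]; intros Hj; [lia|].
    apply polar_inj; [now apply w_pos | now apply w_pos | |].
    - destruct j as [|j].
      + rewrite <- !xcoord_1. apply hx. lia.
      + destruct IH as [Hw _]; [lia|].
        rewrite (w_rec r th n (S (S j))), (w_rec r th' n (S (S j))) in Hw by lia. lra.
    - rewrite <- !xcoord_S by lia. apply hx. lia. }
  intros j Hj. exact (proj2 (polar_step j Hj)).
Qed.

Lemma dxcoord_indep th c :
  (forall i, (1 <= i <= n)%nat ->
     sum_map (seq 1 (n - 1)) (fun j => c j * dxcoord r th n j i) = 0) ->
  forall j, (1 <= j <= n - 1)%nat -> c j = 0.
Proof.
  intros hc m Hm.
  (* W k is the combination of the derivatives of w_k; rotating (W (S k), w_{k+1} c_k) by
     th_k gives (W k, combination for x_{k+1}), so W 1 = 0 propagates upwards. *)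
  set (l := seq 1 (n - 1)) in hc.
  set (W := fun i => sum_map l (fun j => c j * dw r th n j i)).
  assert (sum_kronecker : forall k a b, (1 <= k <= n - 1)%nat ->
    sum_map l (fun j => a * (c j * dw r th n j (S k)) + b * (c j * kronecker k j))
    = a * W (S k) + b * c k).
  { intros k a b Hk. rewrite sum_map_lin, sum_map_kronecker;
      [reflexivity | apply seq_NoDup | apply in_seq; lia]. }
  assert (W_1 : W 1%nat = 0).
  { rewrite <- (hc 1%nat) by lia. apply sum_map_ext. intros j. now rewrite dxcoord_1 by lia. }
  assert (W_S : forall k, (1 <= k <= n - 1)%nat ->
    W k = W (S k) * cos (th k) - (w r th n (S k) * c k) * sin (th k)).
  { intros k Hk. transitivity (cos (th k) * W (S k) + (- w r th n (S k) * sin (th k)) * c k);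
      [|ring].
    rewrite <- sum_kronecker by exact Hk. apply sum_map_ext. intros j.
    rewrite dw_rec by lia. ring. }
  assert (X_S : forall k, (1 <= k <= n - 1)%nat ->
    W (S k) * sin (th k) + (w r th n (S k) * c k) * cos (th k) = 0).
  { intros k Hk. rewrite <- (hc (S k)) by lia.
    transitivity (sin (th k) * W (S k) + (w r th n (S k) * cos (th k)) * c k); [ring|].
    rewrite <- sum_kronecker by exact Hk. apply sum_map_ext. intros j.
    rewrite dxcoord_S by lia. ring. }
  assert (step : forall k, (1 <= k <= n - 1)%nat -> W k = 0 -> W (S k) = 0 /\ c k = 0).
  { intros k Hk H0. destruct (rotation_eq0 (th k) (W (S k)) (w r th n (S k) * c k)) as [HW Hc].
    - now rewrite <- W_S.
    - now apply X_S.
    - split; [exact HW|]. pose proof (w_pos th k Hk).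
      apply Rmult_integral in Hc. destruct Hc; [lra | assumption]. }
  assert (W_0 : forall k, (1 <= k <= n - 1)%nat -> W k = 0).
  { induction k as [|k IH]; intros Hk; [lia|].
    destruct k as [|k]; [exact W_1|]. apply step; [lia|]. apply IH. lia. }
  exact (proj2 (step m Hm (W_0 m Hm))).
Qed.

End Dominance.

Definition near_on (I : nat -> Prop) (th : nat -> R) (P : (nat -> R) -> Prop) : Prop :=
  exists delta, 0 < delta /\
    forall th', (forall j, I j -> Rabs (th' j - th j) < delta) -> P th'.

Global Instance near_on_filter I th : Filter (near_on I th).
Proof.
  constructor.
  - exists 1. split; [lra | tauto].
  - intros P Q [d1 [hd1 HP]] [d2 [hd2 HQ]].
    exists (Rmin d1 d2). split; [now apply Rmin_pos|].
    intros th' Hth'. split; [apply HP | apply HQ]; intros j Ij;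
      pose proof (Hth' j Ij); pose proof (Rmin_l d1 d2); pose proof (Rmin_r d1 d2); lra.
  - intros P Q HPQ [d [hd HP]]. exists d. split; [exact hd|]. intros th' H. now apply HPQ, HP.
Qed.

Lemma filterlim_coord I th j : I j ->
  filterlim (fun th' => th' j) (near_on I th) (locally (th j)).
Proof.
  intros Ij. apply filterlim_locally. intros eps.
  exists eps. split; [apply cond_pos|]. intros th' H. exact (H j Ij).
Qed.

Lemma filter_forall_in {T A : Type} (F : (T -> Prop) -> Prop) {FF : Filter F}
  (l : list A) (P : A -> T -> Prop) :
  (forall a, In a l -> F (P a)) -> F (fun x => forall a, In a l -> P a x).
Proof.
  induction l as [|a l IH]; intros H.
  - apply filter_imp with (fun _ => True); [now intros x _ a' [] | apply Hierarchy.filter_true].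
  - apply filter_imp with (fun x => P a x /\ forall a', In a' l -> P a' x).
    + intros x [Ha Hl] a' [<- | Ha']; auto.
    + apply filter_and; [apply H; now left | apply IH; intros; apply H; now right].
Qed.

Lemma wfrom_continuous r n th k : (k <= n - 2)%nat ->
  filterlim (fun th' => wfrom r th' n k) (near_on (fun j => (1 <= j <= n - 1)%nat) th)
    (locally (wfrom r th n k)).
Proof.
  induction k as [|k IH]; intros Hk; simpl.
  - apply filterlim_const.
  - eapply filterlim_comp_2; [apply filterlim_const | | exact (filterlim_plus _ _)].
    eapply filterlim_comp_2; [apply IH; lia | | exact (filterlim_mult _ _)].
    eapply filterlim_comp; [apply filterlim_coord; lia | apply continuous_cos].
Qed.

Lemma xcoord_continuous r n th i : (2 <= n)%nat -> (1 <= i <= n)%nat ->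
  filterlim (fun th' => xcoord r th' n i) (near_on (fun j => (1 <= j <= n - 1)%nat) th)
    (locally (xcoord r th n i)).
Proof.
  intros Hn Hi. unfold xcoord, w. destruct (Nat.eqb_spec i 1).
  - eapply filterlim_comp_2; [apply wfrom_continuous; lia | | exact (filterlim_mult _ _)].
    eapply filterlim_comp; [apply filterlim_coord; lia | apply continuous_cos].
  - eapply filterlim_comp_2; [apply wfrom_continuous; lia | | exact (filterlim_mult _ _)].
    eapply filterlim_comp; [apply filterlim_coord; lia | apply continuous_sin].
Qed.

Lemma xcoord_eps_delta r n th eps : (2 <= n)%nat -> 0 < eps ->
  exists delta, 0 < delta /\
    forall th', (forall j, (1 <= j <= n - 1)%nat -> Rabs (th' j - th j) < delta) ->
    forall i, (1 <= i <= n)%nat -> Rabs (xcoord r th' n i - xcoord r th n i) < eps.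
Proof.
  intros Hn Heps.
  assert (Hnear : near_on (fun j => (1 <= j <= n - 1)%nat) th
    (fun th' => forall i, In i (seq 1 n) -> Rabs (xcoord r th' n i - xcoord r th n i) < eps)).
  { apply (filter_forall_in _ _ (fun i th' => Rabs (xcoord r th' n i - xcoord r th n i) < eps)).
    intros i Hi. apply in_seq in Hi.
    pose proof (xcoord_continuous r n th i Hn ltac:(lia)) as Hcont.
    rewrite filterlim_locally in Hcont. exact (Hcont (mkposreal eps Heps)). }
  destruct Hnear as [delta [Hdelta Hnear]]. exists delta. split; [exact Hdelta|].
  intros th' Hth' i Hi. apply Hnear; [exact Hth'|]. apply in_seq. lia.
Qed.

Theorem mainTheorem11 (n : nat) (hn : (2 <= n)%nat) (r : nat -> R)
  (hpos : forall i, (1 <= i <= n - 1)%nat -> 0 < r i)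
  (hdom : forall i, (1 <= i <= n - 1)%nat -> r i > tail_sum r n i) :
  (* continuity of theta |-> x(theta) (on R^{n-1}, hence on the torus) *)
  (forall th eps, 0 < eps -> exists delta, 0 < delta /\
     forall th', (forall j, (1 <= j <= n - 1)%nat -> Rabs (th' j - th j) < delta) ->
     forall i, (1 <= i <= n)%nat -> Rabs (xcoord r th' n i - xcoord r th n i) < eps) /\
  (* injectivity on the torus T^{n-1} = (R / 2 pi Z)^{n-1} *)
  (forall th th', (forall i, (1 <= i <= n)%nat -> xcoord r th n i = xcoord r th' n i) ->
     forall j, (1 <= j <= n - 1)%nat -> exists k : Z, th' j = th j + 2 * IZR k * PI) /\
  (* immersion: the partial derivatives exist and are linearly independent *)
  (forall th, exists D : nat -> nat -> R,
     (forall j i, (1 <= j <= n - 1)%nat -> (1 <= i <= n)%nat ->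
        derivable_pt_lim (fun t => xcoord r (upd th j t) n i) (th j) (D j i)) /\
     (forall c : nat -> R,
        (forall i, (1 <= i <= n)%nat ->
           fold_right Rplus 0 (map (fun j => c j * D j i) (seq 1 (n - 1))) = 0) ->
        forall j, (1 <= j <= n - 1)%nat -> c j = 0)) /\
  (* symmetries *)
  (forall th, xcoord r (fun j => - th j) n 1 = xcoord r th n 1) /\
  (forall th i, (2 <= i <= n)%nat -> xcoord r (fun j => - th j) n i = - xcoord r th n i).
Proof.
  split; [intros th eps; now apply xcoord_eps_delta|].
  split; [exact (xcoord_inj r n hdom)|].
  split.
  { intros th. exists (dxcoord r th n). split.
    - intros j i _ _. apply derivable_pt_lim_xcoord.
    - exact (dxcoord_indep r n hdom th). }
  split; [intros th; apply xcoord_opp_1|].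
  intros th i Hi. apply xcoord_opp. lia.
Qed.
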